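(* Assume the standing setup and let $F$ be a facet of $\Delta$. Then for each $q$, $\overline H^q(\Delta)$ has a basis consisting of images of monomials in $K[\Delta]$ whose support is disjoint from $F$.
   Context: Standing setup. $k$ is a field, $d\ge 2$ is an integer, and $\Delta$ is a connected oriented simplicial $k$-homology manifold of dimension $d-1$ with vertex set $V=\{1,\dots,n\}$ (connected, links of nonempty faces $G$ have the $k$-homology of spheres of dimension $d-|G|-1$; facets carry compatible orientations giving signs $\epsilon_F\in\{\pm1\}$, all $1$ in characteristic $2$). Let $K=k(a_{i,j}:1\le i\le d,\ 1\le j\le n)$ with independent indeterminates, $K[\Delta]$ the Stanley–Reisner ring over $K$ in variables $x_1,\dots,x_n$, $\theta_i=\sum_ja_{i,j}x_j$, $H(\Delta)=K[\Delta]/(\theta_1,\dots,\theta_d)$, $\deg:H^d(\Delta)\to K$ the isomorphism with $\deg(x_G)=\epsilon_G/[G]$ for facets $G$ ($x_G=\prod_{j\in G}x_j$, $[G]$ the determinant of the $d\times d$ matrix $(a_{i,j_m})$ for $G=\{j_1<\dots<j_d\}$), and $\overline H(\Delta)$ the Gorenstein quotient of $H(\Delta)$ by the ideal of $y$ with $\deg(yz)=0$ for all $z$, with graded pieces $\overline H^q(\Delta)$. The support of a nonzero monomial $x_{j_1}^{b_1}\cdots x_{j_s}^{b_s}$ with all $b_m>0$ is the set $\{j_1,\dots,j_s\}$. *)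

From HB Require Import structures.
From mathcomp Require Import all_boot all_order all_algebra fraction.
From mathcomp Require Import mpoly.
Set Implicit Arguments. Unset Strict Implicit. Unset Printing Implicit Defensive.
Import Order.TTheory GRing.Theory Num.Theory.
Local Open Scope ring_scope.

Section Defs.
Variables (k : fieldType) (n : nat).

Definition pos (v : 'I_n) (A : {set 'I_n}) : nat := #|[set w in A | (val w < val v)%N]|.

Definition is_complex (D : {set {set 'I_n}}) : Prop :=
  (forall A B : {set 'I_n}, A \in D -> B \subset A -> B \in D) /\
  (forall v : 'I_n, [set v] \in D).

Definition is_facet (D : {set {set 'I_n}}) (F : {set 'I_n}) : Prop :=
  F \in D /\ (forall G, G \in D -> F \subset G -> G = F).

Definition link (D : {set {set 'I_n}}) (G : {set 'I_n}) : {set {set 'I_n}} :=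
  [set H in D | [disjoint H & G] && (H :|: G \in D)].

Definition connected_cx (D : {set {set 'I_n}}) : Prop :=
  forall u v : 'I_n, connect [rel x y | [set x; y] \in D] u v.

(* boundary map from faces of size j to faces of size j-1, as a square
   matrix indexed by all subsets of 'I_n (rows = source faces) *)
Definition Nsets := #|{set 'I_n}|.
Definition bnd (L : {set {set 'I_n}}) (j : nat) : 'M[k]_Nsets :=
  \matrix_(a, b)
    (let t := (enum_val a : {set 'I_n}) in let s := (enum_val b : {set 'I_n}) in
     if (t \in L) && (#|t| == j) then
       \sum_(v in t | s == t :\ v) (-1) ^+ (pos v t)
     else 0).

(* dimension of reduced simplicial homology H~_{j-1}(L; k) *)
Definition rbetti (L : {set {set 'I_n}}) (j : nat) : nat :=
  (#|[set t in L | #|t| == j]| - \rank (bnd L j) - \rank (bnd L j.+1))%N.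

(* connected k-homology manifold of dimension d-1 *)
Definition homology_manifold (d : nat) (D : {set {set 'I_n}}) : Prop :=
  [/\ is_complex D,
      (exists2 G, G \in D & #|G| = d),
      (forall G, G \in D -> #|G| <= d)%N,
      connected_cx D &
      (forall G, G \in D -> G != set0 ->
        forall j, rbetti (link D G) j = (j == d - #|G|)%N)].

(* signs eps (true = -1) form an orientation: sum_F eps_F [F] is a cycle *)
Definition orientation (d : nat) (D : {set {set 'I_n}}) (eps : {set 'I_n} -> bool)
  : Prop :=
  forall R : {set 'I_n}, #|R| = d.-1 ->
    \sum_(u : 'I_n | (u \notin R) && (u |: R \in D))
        ((-1) ^+ (eps (u |: R) + pos u (u |: R)) : k) = 0.

Variable d : nat.
Definition Kf := {fraction {mpoly k[d * n]}}.
Definition a_ (i : 'I_d) (j : 'I_n) : Kf := FracField.tofrac ('X_(mxvec_index i j) : {mpoly k[d * n]}).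

Definition bracket (G : {set 'I_n}) : Kf :=
  \det (\matrix_(i < d, m < d) \sum_(j in G | pos j G == m) a_ i j).

Definition theta (i : 'I_d) : {mpoly Kf[n]} := \sum_(j < n) a_ i j *: 'X_j.

Definition xG (G : {set 'I_n}) : {mpoly Kf[n]} := \prod_(j in G) 'X_j.

Definition msupport (m : 'X_{1..n}) : {set 'I_n} := [set j | (m j != 0)%N].

Definition in_SR_ideal (D : {set {set 'I_n}}) (p : {mpoly Kf[n]}) : Prop :=
  forall m, m \in msupp p -> msupport m \notin D.

Definition in_J (D : {set {set 'I_n}}) (p : {mpoly Kf[n]}) : Prop :=
  exists (c : 'I_d -> {mpoly Kf[n]}) (r : {mpoly Kf[n]}),
    in_SR_ideal D r /\ p = \sum_(i < d) c i * theta i + r.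

Definition homog_of (q : nat) (p : {mpoly Kf[n]}) : Prop :=
  forall m, m \in msupp p -> mdeg m = q.

(* deg : H(D) -> K, extended by 0 outside degree d; the properties
   characterise the map deg : H^d(D) -> K of the paper *)
Definition is_deg (D : {set {set 'I_n}}) (eps : {set 'I_n} -> bool)
  (deg : {mpoly Kf[n]} -> Kf) : Prop :=
  [/\ (forall (c : Kf) p q, deg (c *: p + q) = c * deg p + deg q),
      (forall m : 'X_{1..n}, mdeg m != d -> deg 'X_[m] = 0),
      (forall p, in_J D p -> deg p = 0),
      (forall p, homog_of d p -> deg p = 0 -> in_J D p) &
      (forall G, is_facet D G -> deg (xG G) = (-1) ^+ eps G / bracket G)].

(* y maps to 0 in the Gorenstein quotient Hbar(D) *)
Definition gor_zero (deg : {mpoly Kf[n]} -> Kf) (y : {mpoly Kf[n]}) : Prop :=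
  forall z, deg (y * z) = 0.

End Defs.

From HB Require Import structures.
From mathcomp Require Import all_boot all_order all_algebra fraction.
From mathcomp Require Import mpoly.
From Stdlib Require Import Classical.
Set Implicit Arguments. Unset Strict Implicit. Unset Printing Implicit Defensive.
Import GRing.Theory.
Local Open Scope ring_scope.

(* Work in degree q modulo the subspace Z of polynomials that vanish
   in the Gorenstein quotient; Z contains the ideal (theta) and every monomial
   whose support is not a face. For j in F, the r x r minor of the generic
   matrix (a_ij) on the columns F is invertible, so x_j is a K-combination of
   theta_1, ..., theta_r and of the variables outside F. Substituting this
   repeatedly into a monomial lowers its total degree in the variables of F, so
   every degree-q monomial is congruent modulo Z to a combination of face
   monomials with support disjoint from F; a basis is then extracted from that
   finite spanning family. *)

Section SpanModulo.
Variables (K : fieldType) (V : lmodType K) (T : eqType) (f : T -> V) (Z : V -> Prop).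
Hypotheses (Z0 : Z 0) (ZD : forall x y, Z x -> Z y -> Z (x + y))
  (ZZ : forall (a : K) x, Z x -> Z (a *: x)).

Definition span_mod (B : seq T) (p : V) :=
  exists c : T -> K, Z (p - \sum_(m <- B) c m *: f m).

Definition free_mod (B : seq T) :=
  forall c : T -> K, Z (\sum_(m <- B) c m *: f m) -> forall m, m \in B -> c m = 0.

Lemma span_mod_Z B p : Z p -> span_mod B p.
Proof.
by move=> Zp; exists (fun _ => 0); rewrite big1 ?subr0 // => m _; rewrite scale0r.
Qed.

Lemma span_modD B p q : span_mod B p -> span_mod B q -> span_mod B (p + q).
Proof.
move=> [c1 h1] [c2 h2]; exists (fun m => c1 m + c2 m).
have -> : p + q - \sum_(m <- B) (c1 m + c2 m) *: f m =
    (p - \sum_(m <- B) c1 m *: f m) + (q - \sum_(m <- B) c2 m *: f m).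
  under eq_bigr do rewrite scalerDl.
  by rewrite big_split /= opprD addrACA.
exact: ZD.
Qed.

Lemma span_modZ B a p : span_mod B p -> span_mod B (a *: p).
Proof.
move=> [c h]; exists (fun m => a * c m).
rewrite (eq_bigr (fun m => a *: (c m *: f m))) => [|m _]; last by rewrite scalerA.
by rewrite -scaler_sumr -scalerBr; apply: ZZ.
Qed.

Lemma span_mod_sum B (I : eqType) (r : seq I) (P : I -> V) :
  (forall i, i \in r -> span_mod B (P i)) -> span_mod B (\sum_(i <- r) P i).
Proof.
elim: r => [|i r IH] h; first by rewrite big_nil; apply: span_mod_Z.
rewrite big_cons; apply: span_modD; first by apply: h; rewrite mem_head.
by apply: IH => j hj; apply: h; rewrite inE hj orbT.
Qed.

Lemma span_mod_trans S B p :
  span_mod S p -> (forall x, x \in S -> span_mod B (f x)) -> span_mod B p.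
Proof.
move=> [c h] hS; rewrite -(subrK (\sum_(m <- S) c m *: f m) p).
apply: span_modD; first exact: span_mod_Z.
by apply: span_mod_sum => m hm; apply/span_modZ/hS.
Qed.

Lemma span_mod_mem B x : uniq B -> x \in B -> span_mod B (f x).
Proof.
move=> uB xB; exists (fun m => (m == x)%:R).
rewrite (big_rem x xB) /= eqxx scale1r big1_seq ?addr0 ?subrr //.
move=> y /andP [_ hy]; case: eqP hy => [->|_ _]; last by rewrite scale0r.
by rewrite mem_rem_uniqF.
Qed.

Lemma span_mod_cons x B p : x \notin B -> span_mod B p -> span_mod (x :: B) p.
Proof.
move=> xB [c h]; exists (fun m => if m == x then 0 else c m).
rewrite big_cons eqxx scale0r add0r (eq_big_seq (fun m => c m *: f m)) // => m mB.
by case: eqP mB xB => [-> ->|].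
Qed.

Lemma free_mod_cons x B :
  ~ span_mod B (f x) -> free_mod B -> free_mod (x :: B).
Proof.
move=> xB freeB c; rewrite big_cons => Zc.
have cx0 : c x = 0.
  have [//|cx_neq0] := eqVneq (c x) 0; exfalso; apply: xB.
  exists (fun m => - (c x)^-1 * c m).
  have -> : f x - \sum_(m <- B) (- (c x)^-1 * c m) *: f m =
      (c x)^-1 *: (c x *: f x + \sum_(m <- B) c m *: f m).
    rewrite scalerDr scalerA mulVf // scale1r scaler_sumr -sumrN.
    by congr (_ + _); apply: eq_bigr => m _; rewrite scalerA mulNr scaleNr opprK.
  exact: ZZ.
move: Zc; rewrite cx0 scale0r add0r => Zc m; rewrite inE => /predU1P [-> //|].
exact: freeB.
Qed.

Lemma basis_mod_of_span (S : seq T) : exists B : seq T,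
  [/\ uniq B, {subset B <= S}, free_mod B &
      forall x, x \in S -> span_mod B (f x)].
Proof.
elim: S => [|x S [B [uB sB freeB spanB]]]; first by exists [::].
have [xB | xB] := classic (span_mod B (f x)).
  exists B; split=> // [m /sB mS | y]; first by rewrite inE mS orbT.
  by rewrite inE => /predU1P [-> | /spanB].
have xNB : x \notin B by apply: contra_notN xB; apply: span_mod_mem.
have uxB : uniq (x :: B) by rewrite /= xNB.
exists (x :: B); split => //.
- by move=> m; rewrite !inE => /predU1P [-> | /sB ->]; rewrite ?eqxx ?orbT.
- exact: free_mod_cons.
- move=> y; rewrite inE => /predU1P [-> | /spanB]; last exact: span_mod_cons.
  by apply: span_mod_mem; rewrite ?mem_head.
Qed.

End SpanModulo.

Lemma mxvec_index_inj (m n : nat) (i i' : 'I_m) (j j' : 'I_n) :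
  mxvec_index i j = mxvec_index i' j' -> i = i' /\ j = j'.
Proof. by move=> /cast_ord_inj /enum_rank_inj [-> ->]. Qed.

Section GenericMinor.
Variables (k : fieldType) (n d : nat) (F : {set 'I_n}) (leFd : (#|F| <= d)%N).
Local Notation r := #|F|.
Local Notation K := (Kf k n d).
Local Notation w := (widen_ord leFd).

Definition generic_minor : 'M[K]_r := \matrix_(i, m) a_ k (w i) (enum_val m).

(* Its determinant is a nonzero polynomial: it specialises to det 1 = 1. *)
Lemma generic_minor_unit : generic_minor \in unitmx.
Proof.
rewrite unitmxE unitfE.
pose M0 : 'M[{mpoly k[d * n]}]_r :=
  \matrix_(i, m) 'X_(mxvec_index (w i) (enum_val m)).
have -> : generic_minor = map_mx (@FracField.tofrac _) M0.
  by apply/matrixP => i m; rewrite !mxE.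
rewrite det_map_mx tofrac_eq0.
pose v (x : 'I_(d * n)) : k :=
  [exists m : 'I_r, x == mxvec_index (w m) (enum_val m)]%:R.
have M0_at_v : map_mx (meval v) M0 = 1%:M.
  apply/matrixP => i m; rewrite !mxE mevalXU /v.
  case: existsP => [[m' /eqP /mxvec_index_inj [wi_wm' /enum_val_inj ->]]|hn].
    have -> : i = m' by apply: val_inj; move/(congr1 val): wi_wm'.
    by rewrite eqxx.
  by case: eqP => // im; case: hn; exists i; rewrite im.
apply: contra_neq (@oner_neq0 k) => det0.
by rewrite -(@det1 k r) -M0_at_v det_map_mx det0 rmorph0.
Qed.

Lemma X_facet_vertex_elim (j : 'I_n) : j \in F ->
  exists (b : 'I_r -> K) (c : 'I_n -> K),
    (forall v, v \in F -> c v = 0) /\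
    'X_j = \sum_(i < r) b i *: theta k n (w i) + \sum_(v < n) c v *: 'X_v.
Proof.
move=> jF; pose N := invmx generic_minor; pose m0 := enum_rank_in jF j.
pose e v := \sum_(i < r) N m0 i * a_ k (w i) v.
have e_in_F v : v \in F -> e v = (v == j)%:R.
  move=> vF; have := mulVmx generic_minor_unit.
  move=> /(congr1 (fun M : 'M[K]_r => M m0 (enum_rank_in vF v))).
  rewrite !mxE -[m0 == _](inj_eq enum_val_inj) !enum_rankK_in // eq_sym => <-.
  by apply: eq_bigr => i _; rewrite mxE enum_rankK_in.
exists (fun i => N m0 i), (fun v => if v \in F then 0 else - e v); split.
  by move=> v ->.
have -> : \sum_(i < r) N m0 i *: theta k n (w i) = \sum_(v < n) e v *: 'X_v.
  under eq_bigr do rewrite scaler_sumr.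
  rewrite exchange_big /=; apply: eq_bigr => v _.
  by rewrite scaler_suml; apply: eq_bigr => i _; rewrite scalerA.
rewrite -big_split /= (bigD1 j) //= e_in_F // eqxx scale1r jF scale0r addr0.
rewrite big1 ?addr0 // => v vj; case: ifP => vF; last by rewrite scaleNr addrN.
by rewrite e_in_F // (negbTE vj) !scale0r addr0.
Qed.

End GenericMinor.

Section Gorenstein.
Variables (k : fieldType) (d n : nat) (D : {set {set 'I_n}}) (eps : {set 'I_n} -> bool)
  (deg : {mpoly (Kf k n d)[n]} -> Kf k n d) (hdeg : is_deg D eps deg).
Local Notation K := (Kf k n d).
Local Notation P := {mpoly K[n]}.
Local Notation Z := (gor_zero deg).

Lemma degD p q : deg (p + q) = deg p + deg q.
Proof. by case: hdeg => linear_deg _ _ _ _; rewrite -(scale1r p) linear_deg mul1r scale1r. Qed.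

Lemma deg0 : deg 0 = 0.
Proof. by apply: (addrI (deg 0)); rewrite -degD !addr0. Qed.

Lemma degZ c p : deg (c *: p) = c * deg p.
Proof. by case: hdeg => linear_deg _ _ _ _; rewrite -(addr0 (c *: p)) linear_deg deg0 addr0. Qed.

Lemma deg_sum (I : Type) (r : seq I) (G : I -> P) :
  deg (\sum_(i <- r) G i) = \sum_(i <- r) deg (G i).
Proof. by elim: r => [|i r IH]; rewrite ?big_nil ?deg0 // !big_cons degD IH. Qed.

Lemma deg_in_J p : in_J D p -> deg p = 0.
Proof. by case: hdeg => _ _ degJ _ _; apply: degJ. Qed.

Lemma gor_zero0 : Z 0.
Proof. by move=> z; rewrite mul0r deg0. Qed.

Lemma gor_zeroD x y : Z x -> Z y -> Z (x + y).
Proof. by move=> hx hy z; rewrite mulrDl degD hx hy addr0. Qed.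

Lemma gor_zeroZ (a : K) x : Z x -> Z (a *: x).
Proof. by move=> hx z; rewrite -scalerAl degZ hx mulr0. Qed.

Lemma in_SR_ideal0 : in_SR_ideal D (0 : P).
Proof. by move=> m; rewrite mcoeff_msupp mcoeff0 eqxx. Qed.

Lemma gor_zero_theta (r : nat) (le_rd : (r <= d)%N) (b : 'I_r -> K) (Q : P) :
  Z ((\sum_(i < r) b i *: theta k n (widen_ord le_rd i)) * Q).
Proof.
move=> z; apply: deg_in_J.
exists (fun i => \sum_(i' < r | widen_ord le_rd i' == i) b i' *: (Q * z)), 0.
split; first exact: in_SR_ideal0.
rewrite addr0 mulr_suml mulr_suml.
under [RHS]eq_bigr do rewrite mulr_suml.
rewrite (exchange_big_dep xpredT) //=; apply: eq_bigr => i' _.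
rewrite (big_pred1 (widen_ord le_rd i')) => [|i]; last by rewrite eq_sym.
by rewrite -!scalerAl [in RHS]mulrC mulrA.
Qed.

Lemma gor_zero_nonface (m : 'X_{1..n}) :
  is_complex D -> msupport m \notin D -> Z 'X_[m].
Proof.
move=> [closedD _] mND z; rewrite (mpolyE z) mulr_sumr deg_sum big1_seq //= => m2 _.
rewrite -scalerAr -mpolyXD degZ deg_in_J ?mulr0 //.
exists (fun _ => 0), 'X_[m + m2]; split; last first.
  by rewrite big1 ?add0r // => i _; rewrite mul0r.
move=> m'; rewrite msuppX inE => /eqP ->; apply: contra mND => /closedD; apply.
apply/subsetP => j; rewrite !inE mnmDE; apply: contra.
by rewrite addn_eq0 => /andP [].
Qed.

End Gorenstein.

Section FacetWeight.
Variables (n : nat) (F : {set 'I_n}).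

Definition facet_weight (m : 'X_{1..n}) := (\sum_(j in F) m j)%N.

Lemma facet_weight0_disjoint m :
  facet_weight m = 0%N -> [disjoint msupport m & F].
Proof.
move/eqP; rewrite sum_nat_eq0 => /forallP m0_on_F.
rewrite disjoint_subset; apply/subsetP => j; rewrite !inE.
by apply: contraNN => jF; have := m0_on_F j; rewrite jF.
Qed.

Lemma facet_weight_gt0 m :
  (0 < facet_weight m)%N -> exists2 j, j \in F & (0 < m j)%N.
Proof.
rewrite lt0n sum_nat_eq0 negb_forall => /existsP [j].
by rewrite negb_imply -lt0n => /andP [jF mj]; exists j.
Qed.

Lemma facet_weightDU m v :
  facet_weight (m + U_(v))%MM = (facet_weight m + (v \in F))%N.
Proof.
rewrite /facet_weight; under eq_bigr do rewrite mnmDE mnm1E.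
rewrite big_split /=; congr (_ + _)%N.
have [vF | vNF] := boolP (v \in F); last first.
  by rewrite big1 // => i iF; case: eqP iF vNF => // -> ->.
rewrite (bigD1 v) //= eqxx big1 // => i /andP [_ /negbTE].
by rewrite eq_sym => ->.
Qed.

End FacetWeight.

Section Spanning.
Variables (k : fieldType) (d n : nat) (D : {set {set 'I_n}}) (eps : {set 'I_n} -> bool)
  (hD : homology_manifold k d D)
  (deg : {mpoly (Kf k n d)[n]} -> Kf k n d) (hdeg : is_deg D eps deg)
  (F : {set 'I_n}) (hF : is_facet D F).
Local Notation K := (Kf k n d).
Local Notation Z := (gor_zero deg).
Local Notation monoX := (fun m : 'X_{1..n} => 'X_[m] : {mpoly K[n]}).
Local Notation span_mono := (span_mod monoX Z).
Let Z0 : Z 0 := gor_zero0 hdeg.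
Let ZD := gor_zeroD hdeg.
Let ZZ := gor_zeroZ hdeg.

Definition off_facet_monomial (q : nat) (m : 'X_{1..n}) : bool :=
  [&& mdeg m == q, msupport m \in D & [disjoint msupport m & F]].

Definition off_facet_monomials q : seq 'X_{1..n} :=
  [seq bmnm x | x <- enum {: 'X_{1..n < q.+1}} & off_facet_monomial q (bmnm x)].

Lemma off_facet_monomials_uniq q : uniq (off_facet_monomials q).
Proof.
rewrite map_inj_uniq ?filter_uniq -?enumT ?enum_uniq // => x y; exact: val_inj.
Qed.

Lemma mem_off_facet_monomials q m :
  (m \in off_facet_monomials q) = off_facet_monomial q m.
Proof.
apply/mapP/idP => [[x] | hm]; first by rewrite mem_filter => /andP [h _] ->.
have hb : (mdeg m < q.+1)%N by case/and3P: hm => /eqP ->.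
by exists (BMultinom hb); rewrite // mem_filter /= hm mem_enum.
Qed.

Lemma facet_card_le : (#|F| <= d)%N.
Proof. by case: hD => _ _ le_d _ _; apply: le_d; case: hF. Qed.

Lemma D_is_complex : is_complex D.
Proof. by case: hD. Qed.

Lemma span_mono_facet_weight0 q m : facet_weight F m = 0%N -> mdeg m = q ->
  span_mono (off_facet_monomials q) 'X_[m].
Proof.
move=> wm0 degm.
have [mD | mND] := boolP (msupport m \in D); last first.
  exact/span_mod_Z/(gor_zero_nonface hdeg D_is_complex mND).
apply: (span_mod_mem monoX Z0 (off_facet_monomials_uniq q)).
by rewrite mem_off_facet_monomials /off_facet_monomial degm eqxx mD facet_weight0_disjoint.
Qed.

Lemma span_mono_monomial q m : mdeg m = q -> span_mono (off_facet_monomials q) 'X_[m].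
Proof.
have [t wm] : exists t, facet_weight F m = t by eexists.
elim: t m wm => [|t IH] m wm degm.
  exact: span_mono_facet_weight0.
have [j jF mj] : exists2 j, j \in F & (0 < m j)%N by apply: facet_weight_gt0; rewrite wm.
pose m' := (m - U_(j))%MM.
have m_eq : m = (m' + U_(j))%MM.
  apply/mnmP => i; rewrite mnmDE mnmBE mnm1E; case: eqP => [<-|_].
    by rewrite subnK.
  by rewrite subn0 addn0.
have wm' : facet_weight F m' = t by move: wm; rewrite m_eq facet_weightDU jF addn1 => -[].
have [b [c [c0_on_F Xj_eq]]] := X_facet_vertex_elim k facet_card_le jF.
rewrite m_eq mpolyXD Xj_eq mulrDr.
apply: (span_modD ZD).
  by apply: span_mod_Z; rewrite mulrC; apply: (gor_zero_theta hdeg).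
rewrite mulr_sumr; apply: (span_mod_sum Z0 ZD) => v _.
rewrite -scalerAr -mpolyXD.
have [vF | vNF] := boolP (v \in F).
  by rewrite c0_on_F // scale0r; apply/span_mod_Z.
apply: (span_modZ ZZ).
apply: IH; first by rewrite facet_weightDU (negbTE vNF) addn0.
by rewrite mdegD mdeg1 -degm m_eq mdegD mdeg1.
Qed.

Lemma span_mono_homog q y : homog_of q y -> span_mono (off_facet_monomials q) y.
Proof.
move=> homy; rewrite (mpolyE y); apply: (span_mod_sum Z0 ZD) => m my.
exact/(span_modZ ZZ)/span_mono_monomial/homy.
Qed.

End Spanning.

Theorem lemma4p8 (k : fieldType) (d n : nat) (hd : (2 <= d)%N)
  (D : {set {set 'I_n}}) (eps : {set 'I_n} -> bool)
  (hD : homology_manifold k d D) (heps : orientation k d D eps)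
  (deg : {mpoly (Kf k n d)[n]} -> Kf k n d) (hdeg : is_deg D eps deg)
  (F : {set 'I_n}) (hF : is_facet D F) :
  forall q : nat,
  exists B : seq 'X_{1..n},
    [/\ uniq B,
        (forall m, m \in B ->
           [/\ mdeg m = q, msupport m \in D & [disjoint msupport m & F]]),
        (forall c : 'X_{1..n} -> Kf k n d,
           gor_zero deg (\sum_(m <- B) c m *: 'X_[m]) ->
           forall m, m \in B -> c m = 0) &
        (forall y : {mpoly (Kf k n d)[n]}, homog_of q y ->
           exists c : 'X_{1..n} -> Kf k n d,
             gor_zero deg (y - \sum_(m <- B) c m *: 'X_[m]))].
Proof.
move=> q.
have Z0 := gor_zero0 hdeg; have ZD := gor_zeroD hdeg; have ZZ := gor_zeroZ hdeg.
have [B [uB subB freeB spanB]] :=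
  basis_mod_of_span (fun m => 'X_[m]) Z0 ZZ (off_facet_monomials D F q).
exists B; split => //.
- by move=> m /subB; rewrite mem_off_facet_monomials => /and3P [/eqP -> -> ->].
- move=> y homy.
  exact: (span_mod_trans Z0 ZD ZZ (span_mono_homog hD hdeg hF homy) spanB).
Qed.
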